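(* Let $a_1,a_2,b,c$ be positive integers with $a_1<a_2<b<c\leq 0.25\,a_1^2b^3$ such that $\{a_1,b,c\}$ and $\{a_2,b,c\}$ are $D(4)$-triples. Then $\{a_1,a_2,b,c\}$ is a $D(4)$-quadruple.
   Context: A $D(4)$-$m$-tuple is a set of $m$ distinct positive integers such that the product of any two distinct elements increased by $4$ is a perfect square ($m=3$: triple, $m=4$: quadruple). *)

From mathcomp Require Import all_boot.

Definition is_square (n : nat) : Prop := exists k : nat, n = k * k.

Definition D4pair (x y : nat) : Prop := is_square (x * y + 4).

Definition D4tuple (s : seq nat) : Prop :=
  uniq s /\ all (fun x => 0 < x) s /\
  (forall x y, x \in s -> y \in s -> x != y -> D4pair x y).

From Stdlib Require Import ZArith Lia.
From mathcomp Require Import all_boot.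

(* For a D(4)-triple {a,b,c} with a < b, ab+4 = r^2, ac+4 = s^2, bc+4 = t^2,
   the number u = (rs - at)/2 is a positive integer and e = b + c - a - tu satisfies
   u^2 = ae + 4 (e is the "regular" fourth element d_-(a,b,c) of the triple).
   Apply this to both triples, obtaining (u1,e1) and (u2,e2) with the same t, and
   compare u1 with u2:
   - u1 = u2: then a1 + e1 = a2 + e2 and a1 e1 = a2 e2, so e2 = a1 and
     a1 a2 + 4 = u1^2 is a square, which is the missing pair;
   - u1 < u2: then e1 > t, and squaring t u1 < c leads to a1^2 b^3 < c, against
     the size hypothesis;
   - u2 < u1: then e1 < e2 and a1 < a2, contradicting a1 e1 = u1^2 - 4 > u2^2 - 4 = a2 e2. *)

Open Scope Z_scope.

Lemma even_square (x : Z) : Z.even (x * x) = Z.even x.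
Proof. by rewrite Z.even_mul; case: (Z.even x). Qed.

(* The numerator rs - at of u is even, so u = (rs - at)/2 is an integer. *)
Lemma extension_numerator_even {a b c r s t : Z} :
  r * r = a * b + 4 -> s * s = a * c + 4 -> t * t = b * c + 4 ->
  Z.Even (r * s - a * t).
Proof.
move=> /(f_equal Z.even) Er /(f_equal Z.even) Es /(f_equal Z.even) Et.
apply/Z.even_spec; move: Er Es Et.
rewrite Z.even_sub !even_square !Z.even_add !Z.even_mul /=.
by case: (Z.even a); case: (Z.even b); case: (Z.even c);
   case: (Z.even r); case: (Z.even s); case: (Z.even t).
Qed.

(* ... and positive: (rs)^2 - (at)^2 = 4a(b + c - a) + 16 > 0. *)
Lemma extension_numerator_pos {a b c r s t : Z} :
  0 < a -> a < b -> 0 <= c -> 0 <= r -> 0 <= s -> 0 <= t ->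
  r * r = a * b + 4 -> s * s = a * c + 4 -> t * t = b * c + 4 ->
  a * t < r * s.
Proof.
move=> a_gt0 ab c_ge0 r_ge0 s_ge0 t_ge0 Er Es Et.
have sq_lt : (a * t) * (a * t) < (r * s) * (r * s).
  rewrite (_ : (r * s) * (r * s) = (r * r) * (s * s)); last by ring.
  rewrite (_ : (a * t) * (a * t) = a * a * (t * t)); last by ring.
  rewrite Er Es Et; nia.
nia.
Qed.

Lemma regular_extension {a b c r s t : Z} :
  0 < a -> a < b -> 0 <= c -> 0 <= r -> 0 <= s -> 0 <= t ->
  r * r = a * b + 4 -> s * s = a * c + 4 -> t * t = b * c + 4 ->
  exists u e, 0 < u /\ u * u = a * e + 4 /\ t * u = b + c - a - e.
Proof.
move=> a_gt0 ab c_ge0 r_ge0 s_ge0 t_ge0 Er Es Et.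
have [u Hu] := extension_numerator_even Er Es Et.
have at_lt_rs := extension_numerator_pos a_gt0 ab c_ge0 r_ge0 s_ge0 t_ge0 Er Es Et.
exists u, (b + c - a - t * u); split; first by lia.
split; last by ring.
apply: (Z.mul_reg_l _ _ 4); first by lia.
have -> : 4 * (u * u) = (2 * u) * (2 * u) by ring.
have -> : 4 * (a * (b + c - a - t * u) + 4) =
          4 * a * (b + c - a) - 2 * a * t * (2 * u) + 16 by ring.
rewrite -Hu.
have -> : (r * s - a * t) * (r * s - a * t) =
          (r * r) * (s * s) - 2 * a * t * (r * s) + a * a * (t * t) by ring.
have -> : 2 * a * t * (r * s - a * t) = 2 * a * t * (r * s) - 2 * a * a * (t * t) by ring.
by rewrite Er Es Et; ring.
Qed.

(* If the extension element exceeds t, then c is huge compared to a and b: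
   from (tu)^2 < c^2 and u^2 > at we get a^2 t^6 < c^4, while b^3 c^3 < t^6. *)
Lemma large_extension_forces_large_c {a b c t u e : Z} :
  0 < a -> 0 < b -> b < t -> t * t = b * c + 4 -> 0 < u ->
  u * u = a * e + 4 -> t * u = b + c - a - e -> t < e ->
  a * a * (b * b * b) < c.
Proof.
move=> a_gt0 b_gt0 bt Et u_gt0 Eu Etu te.
have t_gt0 : 0 < t by lia.
have tu_lt_c : (t * u) * (t * u) < c * c by apply: Z.mul_lt_mono_nonneg; nia.
have tt_gt0 : 0 < t * t by nia.
have at3_lt_tu : a * t * (t * t) < (u * u) * (t * t).
  by rewrite -Z.mul_lt_mono_pos_r //; nia.
have at3_sq : a * a * ((t * t) * (t * t) * (t * t)) < (c * c) * (c * c).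
  rewrite (_ : a * a * _ = (a * t * (t * t)) * (a * t * (t * t))); last by ring.
  by apply: Z.mul_lt_mono_nonneg; nia.
have bc3 : (b * c) * (b * c) * (b * c) < (t * t) * (t * t) * (t * t).
  have bc_lt : 0 <= b * c < t * t by nia.
  have bc2 : (b * c) * (b * c) < (t * t) * (t * t) by apply: Z.mul_lt_mono_nonneg; lia.
  by apply: Z.mul_lt_mono_nonneg; nia.
have c4 : (a * a * (b * b * b)) * (c * c * c) < c * (c * c * c).
  rewrite (_ : _ * (c * c * c) = a * a * ((b * c) * (b * c) * (b * c))); last by ring.
  rewrite (_ : c * _ = (c * c) * (c * c)); last by ring.
  apply: Z.le_lt_trans at3_sq; apply: Z.mul_le_mono_nonneg_l; nia.
have c3_gt0 : 0 < c * c * c by nia.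
by move: c4; rewrite -(Z.mul_lt_mono_pos_r (c * c * c)).
Qed.

Lemma nonneg_of_extension {a e u : Z} :
  0 < a -> 2 <= u -> u * u = a * e + 4 -> 0 <= e.
Proof. by move=> *; nia. Qed.

(* Case u1 < u2: t <= t(u2 - u1) = (a1 + e1) - (a2 + e2) forces e1 > t, hence c > a1^2 b^3. *)
Lemma first_extension_smaller_forces_large_c {a1 a2 b c t u1 u2 e1 e2 : Z} :
  0 < a1 -> a1 < a2 -> 0 < b -> b < t -> t * t = b * c + 4 ->
  0 < u1 -> u1 < u2 ->
  u1 * u1 = a1 * e1 + 4 -> u2 * u2 = a2 * e2 + 4 ->
  t * u1 = b + c - a1 - e1 -> t * u2 = b + c - a2 - e2 ->
  a1 * a1 * (b * b * b) < c.
Proof.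
move=> a1_gt0 a12 b_gt0 bt Et u1_gt0 u12 E1 E2 T1 T2.
have e2_ge0 : 0 <= e2 by apply: (@nonneg_of_extension a2 e2 u2); lia.
have gap : t <= t * (u2 - u1) by nia.
by apply: (@large_extension_forces_large_c a1 b c t u1 e1); lia.
Qed.

(* Case u1 = u2: the two extension elements satisfy e2 = a1, so a1 a2 + 4 = u^2. *)
Lemma extensions_equal {a1 a2 b c t u e1 e2 : Z} :
  a1 < a2 ->
  u * u = a1 * e1 + 4 -> u * u = a2 * e2 + 4 ->
  t * u = b + c - a1 - e1 -> t * u = b + c - a2 - e2 ->
  a1 * a2 + 4 = u * u.
Proof.
move=> a12 E1 E2 T1 T2.
have sum_eq : e1 = a2 + e2 - a1 by lia.
have /Z.mul_eq_0 [|e2_eq] : (a2 - a1) * (a1 - e2) = 0 by rewrite sum_eq in E1; nia.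
  by lia.
by rewrite E2; nia.
Qed.

(* Case u2 < u1 is impossible: it forces e1 < e2 while a1 e1 > a2 e2. *)
Lemma second_extension_not_smaller {a1 a2 b c t u1 u2 e1 e2 : Z} :
  0 < a1 -> a1 < a2 -> a2 < t -> 0 < u2 -> u2 < u1 ->
  u1 * u1 = a1 * e1 + 4 -> u2 * u2 = a2 * e2 + 4 ->
  t * u1 = b + c - a1 - e1 -> t * u2 = b + c - a2 - e2 -> False.
Proof.
move=> a1_gt0 a12 a2t u2_gt0 u21 E1 E2 T1 T2.
have e1_ge0 : 0 <= e1 by apply: (@nonneg_of_extension a1 e1 u1); lia.
have gap : t <= t * (u1 - u2) by nia.
have e12 : e1 < e2 by lia.
have sq21 : u2 * u2 < u1 * u1 by apply: Z.mul_lt_mono_nonneg; lia.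
nia.
Qed.

Lemma D4_pair_of_two_triples {a1 a2 b c r1 s1 r2 s2 t : Z} :
  0 < a1 -> a1 < a2 -> a2 < b -> b < c ->
  0 <= r1 -> 0 <= s1 -> 0 <= r2 -> 0 <= s2 -> 0 <= t ->
  4 * c <= a1 * a1 * (b * b * b) ->
  r1 * r1 = a1 * b + 4 -> s1 * s1 = a1 * c + 4 ->
  r2 * r2 = a2 * b + 4 -> s2 * s2 = a2 * c + 4 -> t * t = b * c + 4 ->
  exists k, 0 <= k /\ a1 * a2 + 4 = k * k.
Proof.
move=> a1_gt0 a12 a2b bc r1_ge0 s1_ge0 r2_ge0 s2_ge0 t_ge0 c_small Er1 Es1 Er2 Es2 Et.
have [a1b a2_gt0 b_gt0 c_ge0] : [/\ a1 < b, 0 < a2, 0 < b & 0 <= c] by split; lia.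
have [u1 [e1 [u1_gt0 [E1 T1]]]] :=
  regular_extension a1_gt0 a1b c_ge0 r1_ge0 s1_ge0 t_ge0 Er1 Es1 Et.
have [u2 [e2 [u2_gt0 [E2 T2]]]] :=
  regular_extension a2_gt0 a2b c_ge0 r2_ge0 s2_ge0 t_ge0 Er2 Es2 Et.
have bb_lt_bc : b * b < b * c by rewrite -Z.mul_lt_mono_pos_l; lia.
have bt : b < t by apply: Z.square_lt_simpl_nonneg; lia.
case: (Z.lt_total u1 u2) => [u12 | [u12 | u21]].
- have := first_extension_smaller_forces_large_c a1_gt0 a12 b_gt0 bt Et u1_gt0 u12 E1 E2 T1 T2.
  by lia.
- by subst u2; exists u1; split; [lia | exact: extensions_equal a12 E1 E2 T1 T2].
- by case: (second_extension_not_smaller a1_gt0 a12 (Z.lt_trans _ _ _ a2b bt) u2_gt0 u21 E1 E2 T1 T2).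
Qed.

Close Scope Z_scope.

Lemma D4pair_sym (x y : nat) : D4pair x y -> D4pair y x.
Proof. by rewrite /D4pair mulnC. Qed.

Lemma D4tuple_cons (x : nat) (s : seq nat) :
  x \notin s -> 0 < x -> D4tuple s -> (forall y, y \in s -> D4pair x y) ->
  D4tuple (x :: s).
Proof.
move=> xNs x_gt0 [s_uniq [s_pos s_pairs]] x_pairs; split; last split.
- by rewrite cons_uniq xNs.
- by rewrite /= x_gt0.
- move=> y z; rewrite !inE => /predU1P[-> | ys] /predU1P[-> | zs]; rewrite ?eqxx //.
  + by move=> _; exact: x_pairs.
  + by move=> _; apply/D4pair_sym/x_pairs.
  + exact: s_pairs.
Qed.

Lemma D4triple_roots {x y z : nat} :
  x < y -> y < z -> D4tuple [:: x; y; z] ->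
  exists r s t, [/\ x * y + 4 = r * r, x * z + 4 = s * s & y * z + 4 = t * t].
Proof.
move=> xy yz [_ [_ pairs]].
have [xT yT zT] : [/\ x \in [:: x; y; z], y \in [:: x; y; z] & z \in [:: x; y; z]].
  by rewrite !inE !eqxx ?orbT.
have [r Er] := pairs x y xT yT (negbT (ltn_eqF xy)).
have [s Es] := pairs x z xT zT (negbT (ltn_eqF (ltn_trans xy yz))).
have [t Et] := pairs y z yT zT (negbT (ltn_eqF yz)).
by exists r, s, t.
Qed.

Lemma square_eqZ {x y r : nat} :
  x * y + 4 = r * r -> (Z.of_nat r * Z.of_nat r = Z.of_nat x * Z.of_nat y + 4)%Z.
Proof. by move=> /(f_equal Z.of_nat); rewrite Nat2Z.inj_add !Nat2Z.inj_mul. Qed.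

Lemma ltZ {m n : nat} : m < n -> (Z.of_nat m < Z.of_nat n)%Z.
Proof. by move=> /ltP; lia. Qed.

Lemma D4pair_of_square {x y : nat} {k : Z} :
  (0 <= k)%Z -> (Z.of_nat x * Z.of_nat y + 4 = k * k)%Z -> D4pair x y.
Proof.
move=> k_ge0 Ek; exists (Z.to_nat k); apply: Nat2Z.inj.
by rewrite Nat2Z.inj_add !Nat2Z.inj_mul Z2Nat.id.
Qed.

Theorem mainTheorem12 (a1 a2 b c : nat) :
  0 < a1 -> a1 < a2 -> a2 < b -> b < c ->
  4 * c <= a1 ^ 2 * b ^ 3 ->
  D4tuple [:: a1; b; c] -> D4tuple [:: a2; b; c] ->
  D4tuple [:: a1; a2; b; c].
Proof.
move=> a1_gt0 a12 a2b bc c_small T1 T2.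
have a1b := ltn_trans a12 a2b; have a1c := ltn_trans a1b bc.
have [r1 [s1 [t [Er1 Es1 Et]]]] := D4triple_roots a1b bc T1.
have [r2 [s2 [_ [Er2 Es2 _]]]] := D4triple_roots a2b bc T2.
have c_smallZ : (4 * Z.of_nat c <=
                 Z.of_nat a1 * Z.of_nat a1 * (Z.of_nat b * Z.of_nat b * Z.of_nat b))%Z.
  by move: c_small; rewrite !expnS expn0 !muln1 -!multE => /leP; lia.
have [k [k_ge0 Ek]] := D4_pair_of_two_triples
  (ltZ a1_gt0) (ltZ a12) (ltZ a2b) (ltZ bc) (Nat2Z.is_nonneg r1) (Nat2Z.is_nonneg s1)
  (Nat2Z.is_nonneg r2) (Nat2Z.is_nonneg s2) (Nat2Z.is_nonneg t) c_smallZ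
  (square_eqZ Er1) (square_eqZ Es1) (square_eqZ Er2) (square_eqZ Es2) (square_eqZ Et).
apply: D4tuple_cons => //.
- by rewrite !inE !negb_or !ltn_eqF.
- move=> y; rewrite !inE => /or3P[] /eqP ->; first exact: D4pair_of_square Ek.
  + by exists r1.
  + by exists s1.
Qed.
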